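(* Let $n\in\mathbb N$. Then $\delta(m)<\delta(n)$ for every $m\in\mathbb N$ with $m<n$ if and only if $n=1$ or $n$ is a prime number.
   Context: $\mathbb N$ is the set of positive integers. For $n\in\mathbb N$, $\delta(n)=\min\{\,r+s : r,s\in\mathbb N,\ r\le s,\ rs=n\,\}$, i.e. the minimum of $d+n/d$ over positive divisors $d$ of $n$. *)

From mathcomp Require Import all_boot.
Set Implicit Arguments. Unset Strict Implicit. Unset Printing Implicit Defensive.

(* The seed n.+1 of the min-fold is the value at d = 1, so it does not
   affect the minimum for n >= 1. (For n = 0, divisors 0 = [::], value 1;
   n = 0 is never used since the statement quantifies over positive n.) *)
Definition delta (n : nat) : nat :=
  \big[minn/n.+1]_(d <- divisors n) (d + n %/ d).

(* A prime n has delta n = n + 1, while delta m <= m + 1 for every m, which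
   gives one direction.  A composite n = d q with 1 < d <= q has
   delta n <= d + q <= n/2 + 2, and Bertrand's postulate provides a prime
   p with n/2 < p < n, for which delta p = p + 1 >= delta n.
   Bertrand's postulate is proved by Erdos's argument: if no prime lies in
   (k, 2k], every prime dividing C(2k, k) is at most 2k/3, the primes above
   sqrt(2k) divide it at most once, and every prime power dividing it is at
   most 2k; together with prod_{p <= x} p <= 4^x this contradicts
   4^k <= (2k + 1) C(2k, k) for large k. *)

From mathcomp Require Import all_boot zify.
Set Implicit Arguments. Unset Strict Implicit. Unset Printing Implicit Defensive.

Lemma leq_prod_nat a b (F G : nat -> nat) :
  (forall i, a <= i < b -> F i <= G i) ->
  \prod_(a <= i < b) F i <= \prod_(a <= i < b) G i.
Proof. by move=> leFG; rewrite big_nat [leqRHS]big_nat; apply: leq_prod. Qed.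

Lemma logn_nprime p n : ~~ prime p -> logn p n = 0.
Proof. by move=> p_nprime; rewrite lognE (negbTE p_nprime). Qed.

Lemma prod_pfactor_logn_part N B (P : pred nat) :
  \prod_(0 <= p < B | P p) p ^ logn p N = N`_[pred p | P p && (p < B)].
Proof.
rewrite (@widen_partn (maxn N B)) ?leq_maxl //.
by rewrite (@big_nat_widen _ _ _ _ B (maxn N B).+1) // leqW ?leq_maxr.
Qed.

Lemma prod_pfactor_logn_leq N B (P : pred nat) : 0 < N ->
  \prod_(0 <= p < B | P p) p ^ logn p N <= N.
Proof. by move=> N_gt0; rewrite prod_pfactor_logn_part dvdn_leq ?dvdn_part. Qed.

Lemma prod_pfactor_logn N B : 0 < N -> (forall p, prime p -> p %| N -> p < B) ->
  \prod_(0 <= p < B) p ^ logn p N = N.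
Proof.
move=> N_gt0 primes_ltB; rewrite (prod_pfactor_logn_part _ _ predT) part_pnat_id //.
by apply/pnatP => // p p_pr p_dvd; rewrite inE primes_ltB.
Qed.

Lemma prod_primes_leq a b N : 0 < N ->
  (forall p, prime p -> a <= p < b -> p %| N) ->
  \prod_(a <= p < b | prime p) p <= N.
Proof.
move=> N_gt0 dvdN; rewrite big_mkcond /=.
apply: leq_trans (_ : \prod_(a <= p < b) p ^ logn p N <= _); last first.
  by rewrite (@big_nat_widenl _ _ _ a 0) //; apply: prod_pfactor_logn_leq.
apply: leq_prod_nat => p range_p; case: ifP => [p_pr|_]; last exact: pfactor_gt0.
rewrite -{1}[p]expn1 (leq_exp2l _ _ (prime_gt1 p_pr)) logn_gt0 mem_primes p_pr N_gt0.
exact: dvdN.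
Qed.

Lemma prime_dvd_fact p n : prime p -> (p %| n`!) = (p <= n).
Proof.
move=> p_pr; elim: n => [|n IHn].
  by rewrite fact0 dvdn1 leqn0; case: p p_pr => [|[]].
rewrite factS Euclid_dvdM // IHn; case: (leqP p n) => [le_pn|lt_np].
  by rewrite orbT leqW.
rewrite orbF; apply/idP/idP => [/dvdn_leq -> //|le_p_Sn].
by have /eqP-> : p == n.+1 by rewrite eqn_leq le_p_Sn.
Qed.

Lemma prime_dvd_bin_leq p n m : prime p -> m <= n -> p %| 'C(n, m) -> p <= n.
Proof.
move=> p_pr le_mn p_dvd; rewrite -(prime_dvd_fact _ p_pr) -(bin_fact le_mn).
exact: dvdn_mulr.
Qed.

Lemma prime_dvd_bin_gt p n m : prime p -> m < p -> n - m < p -> p <= n ->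
  p %| 'C(n, m).
Proof.
move=> p_pr lt_mp lt_nmp le_pn.
have := prime_dvd_fact n p_pr; rewrite le_pn -(bin_fact (ltnW (leq_trans lt_mp le_pn))).
rewrite !Euclid_dvdM // !prime_dvd_fact //.
by rewrite leqNgt lt_mp [p <= _]leqNgt lt_nmp !orbF.
Qed.

Lemma logn_fact_widen p n N : prime p -> n <= N ->
  logn p n`! = \sum_(1 <= j < N.+1) n %/ p ^ j.
Proof.
move=> p_pr le_nN; rewrite logn_fact // [RHS](@big_cat_nat _ _ _ n.+1) //=.
rewrite [X in _ = _ + X]big1_seq ?addn0 // => j; rewrite mem_index_iota.
case/andP=> _ /andP[lt_nj _]; apply: divn_small.
exact: leq_trans lt_nj (ltnW (ltn_expl j (prime_gt1 p_pr))).
Qed.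

(* Kummer: the j-th term is the carry into the digit of weight p ^ j when m
   and n are added in base p. *)
Lemma logn_bin p m n : prime p ->
  logn p 'C(m + n, m) = \sum_(1 <= j < (m + n).+1) (p ^ j <= m %% p ^ j + n %% p ^ j).
Proof.
move=> p_pr; have p_gt0 := prime_gt0 p_pr.
have := congr1 (logn p) (bin_fact (leq_addr n m)); rewrite addKn.
rewrite !lognM ?muln_gt0 ?fact_gt0 ?bin_gt0 ?leq_addr //.
rewrite !(@logn_fact_widen p _ (m + n)) ?leq_addr ?leq_addl //.
under [in RHS]eq_bigr => j _ do rewrite divnD ?expn_gt0 ?p_gt0 //.
by rewrite !big_split /=; lia.
Qed.

Lemma pfactor_logn_bin_leq p m n : prime p -> 0 < m + n ->
  p ^ logn p 'C(m + n, m) <= m + n.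
Proof.
move=> p_pr mn_gt0; have p_gt1 := prime_gt1 p_pr.
set t := trunc_log p (m + n).
have le_pt_mn : p ^ t <= m + n := trunc_logP p_gt1 mn_gt0.
have lt_t_mn : t < (m + n).+1 := leq_trans (ltn_expl t p_gt1) (leqW le_pt_mn).
apply: leq_trans (leq_pexp2l (ltnW p_gt1) _) le_pt_mn.
rewrite logn_bin // (@big_cat_nat _ _ _ t.+1) //=.
rewrite [X in _ + X]big1_seq ?addn0 => [|j]; last first.
  rewrite mem_index_iota => /andP[_ /andP[lt_tj _]]; apply/eqP; rewrite eqb0 -ltnNge.
  apply: leq_ltn_trans (leq_add (leq_mod m _) (leq_mod n _)) _.
  exact: leq_trans (trunc_log_ltn _ p_gt1) (leq_pexp2l (ltnW p_gt1) lt_tj).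
apply: leq_trans (_ : \sum_(1 <= j < t.+1) 1 <= _); last by rewrite sum_nat_const_nat; lia.
by apply: leq_sum => j _; apply: leq_b1.
Qed.

Lemma mul_central_binS k :
  k.+1 * 'C(k.+1.*2, k.+1) = 2 * (k.*2).+1 * 'C(k.*2, k).
Proof.
have := mul_bin_diag k.+1.*2 k; have := mul_bin_diag (k.*2).+1 k.
have := @bin_sub (k.*2).+1 k; rewrite doubleS /= => <-; last lia.
have -> : (k.*2).+1 - k = k.+1 by lia.
lia.
Qed.

Lemma central_bin_geq k : 4 ^ k <= (k.*2).+1 * 'C(k.*2, k).
Proof.
elim: k => [|k IHk]; first by rewrite bin0.
rewrite -(@leq_pmul2l k.+1) // expnS [leqRHS]mulnCA mul_central_binS.
apply: leq_trans (leq_mul (leqnn _) (leq_mul (leqnn 4) IHk)) _.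
rewrite -mulnA; set c := _ * 'C(_, _); nia.
Qed.

Lemma bin_odd_leq m : 'C((m.*2).+1, m) <= 4 ^ m.
Proof.
have Esum : 2 ^ (m.*2).+1 = \sum_(0 <= i < (m.*2).+2) 'C((m.*2).+1, i).
  by rewrite -[2]/(1 + 1) expnDn big_mkord; apply: eq_bigr => i _; rewrite !exp1n !muln1.
have Esym : 'C((m.*2).+1, m.+1) = 'C((m.*2).+1, m).
  by rewrite -bin_sub; [congr 'C(_, _) |]; lia.
rewrite (@big_cat_nat _ _ _ m) ?(@big_ltn _ _ _ m) ?(@big_ltn _ _ _ m.+1) /= ?Esym in Esum;
  try lia.
have -> : 4 ^ m = 2 ^ m.*2 by rewrite -mul2n expnM.
by rewrite expnS in Esum; lia.
Qed.

Definition primorial x := \prod_(0 <= p < x.+1 | prime p) p.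

Lemma primorial_leq x : primorial x <= 4 ^ x.
Proof.
elim/ltn_ind: x => x IHx.
have [le_x2|lt_2x] := leqP x 2.
  by case: x le_x2 {IHx} => [|[|[|]]] //; rewrite /primorial unlock.
have [m Ex] : exists m, x = (m.*2).+2 \/ x = (m.*2).+1 by exists x.-1./2; lia.
case: Ex => Ex; subst x.
  have x_nprime : ~~ prime (m.*2).+2.
    by rewrite -doubleS -mul2n; apply/negP => /primeP[_ /(_ 2)]; rewrite dvdn_mulr //; lia.
  rewrite /primorial big_mkcond big_nat_recr //= -big_mkcond (negbTE x_nprime) muln1.
  by apply: leq_trans (IHx _ _) _; rewrite // leq_pexp2l.
rewrite /primorial (@big_cat_nat _ _ _ m.+2) //=; last lia.
have -> : 4 ^ (m.*2).+1 = 4 ^ m.+1 * 4 ^ m by rewrite -expnD; congr (_ ^ _); lia.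
apply: leq_mul; first by apply: IHx; lia.
apply: leq_trans (bin_odd_leq m).
apply: prod_primes_leq; first by rewrite bin_gt0; lia.
by move=> p p_pr /andP[lt_mSp lt_p]; apply: prime_dvd_bin_gt => //; lia.
Qed.

Lemma pfactor_central_bin_leq p k : prime p -> 0 < k ->
  p ^ logn p 'C(k.*2, k) <= k.*2.
Proof.
by move=> p_pr k_gt0; have := @pfactor_logn_bin_leq p k k p_pr; rewrite addnn double_gt0; apply.
Qed.

Lemma logn_central_bin_eq0 p k : prime p -> 2 < p -> p <= k -> k.*2 < 3 * p ->
  logn p 'C(k.*2, k) = 0.
Proof.
move=> p_pr p_gt2 le_pk lt_2k_3p; rewrite -addnn logn_bin //.
rewrite big1_seq // => -[|[|j]] /andP[_]; rewrite mem_index_iota // => _.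
  have ->: k %% p = k - p by rewrite -[k in k %% _](subnK le_pk) modnDr modn_small; lia.
  by apply/eqP; rewrite eqb0 expn1 -ltnNge; lia.
apply/eqP; rewrite eqb0 -ltnNge.
apply: leq_ltn_trans (leq_add (leq_mod k _) (leq_mod k _)) _.
have: p ^ 2 <= p ^ j.+2 by apply: leq_pexp2l; rewrite ?prime_gt0.
nia.
Qed.

Lemma pfactor_central_bin_large p k : prime p -> 0 < k -> k.*2 < p * p ->
  ~~ (k < p <= k.*2) ->
  p ^ logn p 'C(k.*2, k) <= (if p <= k.*2 %/ 3 then p else 1).
Proof.
move=> p_pr k_gt0 lt_2k_pp p_out_gap; have p_gt1 := prime_gt1 p_pr.
have le_pfactor_2k := pfactor_central_bin_leq p_pr k_gt0.
case: (leqP p (k.*2 %/ 3)) => [_|lt_2k3_p].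
  rewrite -[leqRHS]expn1 leq_exp2l // leqNgt; apply/negP => logn_gt1.
  have : p ^ 2 <= p ^ logn p 'C(k.*2, k) by rewrite leq_exp2l.
  nia.
have [le_pk|lt_kp] := leqP p k; first by rewrite logn_central_bin_eq0 //; nia.
move: le_pfactor_2k p_out_gap; rewrite lt_kp /= -ltnNge.
case: (logn _ _) => // e; rewrite expnS => le_pe_2k lt_2k_p.
have : 0 < p ^ e by rewrite expn_gt0 ltnW.
nia.
Qed.

Lemma central_bin_leq_gap k r : 0 < k -> r * r <= k.*2 < r.+1 * r.+1 ->
  (forall p, prime p -> ~~ (k < p <= k.*2)) ->
  'C(k.*2, k) <= (k.*2) ^ r.+1 * primorial (k.*2 %/ 3).
Proof.
move=> k_gt0 /andP[le_rr_2k lt_2k_SrSr] no_prime.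
set C := 'C(k.*2, k); set y := k.*2 %/ 3.
have C_gt0 : 0 < C by rewrite bin_gt0 -addnn leq_addr.
rewrite -(@prod_pfactor_logn C (k.*2).+1) // => [|p p_pr]; last first.
  by rewrite ltnS; apply: prime_dvd_bin_leq; rewrite // -addnn leq_addr.
rewrite (@big_cat_nat _ _ _ r.+1) //=; last by nia.
apply: leq_mul.
  rewrite -[r.+1 in leqRHS]subn0 -prod_nat_const_nat; apply: leq_prod_nat => p _.
  have [p_pr|p_nprime] := boolP (prime p); last by rewrite logn_nprime //; lia.
  exact: pfactor_central_bin_leq.
pose g p := if prime p && (p <= y) then p else 1.
have -> : primorial y = \prod_(0 <= p < (k.*2).+1) g p.
  by rewrite /primorial (@big_nat_widen _ _ _ _ _ (k.*2).+1) ?big_mkcond //; lia.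
apply: leq_trans (_ : \prod_(r.+1 <= p < (k.*2).+1) g p <= _); last first.
  rewrite [leqRHS](@big_cat_nat _ _ _ r.+1) //=; last by nia.
  by apply: leq_pmull; apply: prodn_gt0 => p; rewrite /g; case: ifP => // /andP[/prime_gt0].
apply: leq_prod_nat => p /andP[lt_rp _]; rewrite /g.
have [p_pr|p_nprime] := boolP (prime p); last by rewrite logn_nprime.
apply: pfactor_central_bin_large => //; last exact: no_prime.
by apply: leq_trans lt_2k_SrSr _; apply: leq_mul.
Qed.

Lemma exists_isqrt n : exists r, r * r <= n < r.+1 * r.+1.
Proof.
elim: n => [|n [r /andP[le_rr lt_n]]]; first by exists 0.
have [lt_Sn|le_Sn] := ltnP n.+1 (r.+1 * r.+1); first by exists r; rewrite lt_Sn; lia.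
by exists r.+1; rewrite le_Sn; nia.
Qed.

Lemma expn6_leq_exp2 x : 36 <= x -> x ^ 6 <= 2 ^ (x - 3).
Proof.
elim: x => // x IHx le_36_Sx; have [lt_x36|le_36x] := ltnP x 36.
  have -> : x = 35 by lia.
  by rewrite (_ : 35.+1 - 3 = 33); [lia|].
have le_x3 : 8 * x.+1 ^ 3 <= 9 * x ^ 3 by nia.
have le_x6 : 64 * x.+1 ^ 6 <= 81 * x ^ 6.
  by have := leq_mul le_x3 le_x3; rewrite mulnACA [leqRHS]mulnACA -!expnD.
have -> : 2 ^ (x.+1 - 3) = 2 * 2 ^ (x - 3) by rewrite -expnS; congr (_ ^ _); lia.
by have := IHx le_36x; lia.
Qed.

(* With x = r + 1 > sqrt(2k), the left side is at most x^(2x+2) 4^(2k/3); cubing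
   leaves 4^k <= x^(6x+6) <= 2^((x-3)(x+1)), while 4^k >= 2^(r^2) = 2^((x-1)^2). *)
Lemma bertrand_numeric k r : 631 <= k -> r * r <= k.*2 < r.+1 * r.+1 ->
  (k.*2).+1 * ((k.*2) ^ r.+1 * 4 ^ (k.*2 %/ 3)) < 4 ^ k.
Proof.
move=> le_631k /andP[le_rr_2k lt_2k_SrSr]; rewrite ltnNge; apply/negP => le_4k.
have le_36_Sr : 36 <= r.+1 by nia.
have le_4k_rr : 4 ^ k <= (r.+1 ^ 2) ^ r.+2 * 4 ^ (k.*2 %/ 3).
  apply: leq_trans le_4k _; rewrite [_ ^ r.+2]expnS -mulnA -mulnn.
  by apply: leq_mul => //; apply: leq_mul => //; rewrite leq_exp2r // ltnW.
have le_cube : 4 ^ k * 4 ^ k.*2 <= (r.+1 ^ 6) ^ r.+2 * 4 ^ k.*2.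
  rewrite -expnD (_ : k + k.*2 = k * 3); last by lia.
  rewrite expnM; rewrite -(@leq_exp2r _ _ 3) // in le_4k_rr.
  apply: leq_trans le_4k_rr _.
  by rewrite expnMn -!expnM; apply: leq_mul; apply: leq_pexp2l => //; lia.
rewrite leq_pmul2r ?expn_gt0 // in le_cube.
have le_2rr : 2 ^ (r * r) <= 2 ^ ((r.+1 - 3) * r.+2).
  apply: leq_trans (leq_pexp2l _ le_rr_2k) _ => //; rewrite -mul2n expnM.
  apply: leq_trans le_cube _; rewrite expnM leq_exp2r //; exact: expn6_leq_exp2.
by rewrite leq_exp2l // in le_2rr; nia.
Qed.

Lemma bertrand_small k : 0 < k < 631 -> exists2 p, prime p & k < p <= k.*2.
Proof.
case/andP=> k_gt0 lt_k631.
have [lt_k2|le_2k] := ltnP k 2; first by exists 2 => //; lia.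
have [lt_k3|le_3k] := ltnP k 3; first by exists 3 => //; lia.
have [lt_k5|le_5k] := ltnP k 5; first by exists 5 => //; lia.
have [lt_k7|le_7k] := ltnP k 7; first by exists 7 => //; lia.
have [lt_k13|le_13k] := ltnP k 13; first by exists 13 => //; lia.
have [lt_k23|le_23k] := ltnP k 23; first by exists 23 => //; lia.
have [lt_k43|le_43k] := ltnP k 43; first by exists 43 => //; lia.
have [lt_k83|le_83k] := ltnP k 83; first by exists 83 => //; lia.
have [lt_k163|le_163k] := ltnP k 163; first by exists 163 => //; lia.
have [lt_k317|le_317k] := ltnP k 317; first by exists 317 => //; lia.
by exists 631 => //; lia.
Qed.

Theorem bertrand k : 0 < k -> exists2 p, prime p & k < p <= k.*2.
Proof.
move=> k_gt0; have [lt_k631|le_631k] := ltnP k 631.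
  by apply: bertrand_small; rewrite k_gt0.
pose in_gap p := prime p && (k < p <= k.*2).
have [/hasP[p _ /andP[p_pr gap_p]]|/hasPn no_prime] := boolP (has in_gap (iota 0 (k.*2).+1)).
  by exists p.
have {}no_prime p : prime p -> ~~ (k < p <= k.*2).
  move=> p_pr; apply/negP => gap_p.
  have p_in : p \in iota 0 (k.*2).+1 by rewrite mem_iota; lia.
  by move: (no_prime p p_in); rewrite /in_gap p_pr gap_p.
have [r r_sqrt] := exists_isqrt k.*2.
have := bertrand_numeric le_631k r_sqrt; rewrite ltnNge => /negP[].
apply: leq_trans (central_bin_geq k) _; rewrite leq_mul2l; apply/orP; right.
apply: leq_trans (central_bin_leq_gap k_gt0 r_sqrt no_prime) _.
by rewrite leq_mul2l primorial_leq orbT.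
Qed.

Lemma bigmin_leq (s : seq nat) x0 (F : nat -> nat) d :
  d \in s -> \big[minn/x0]_(i <- s) F i <= F d.
Proof.
elim: s => // a s IHs; rewrite inE big_cons => /orP[/eqP->|d_in_s].
  exact: geq_minl.
exact: leq_trans (geq_minr _ _) (IHs d_in_s).
Qed.

Lemma delta_leq n d : 0 < n -> d %| n -> delta n <= d + n %/ d.
Proof. by move=> n_gt0 d_dvd; apply: bigmin_leq; rewrite -dvdn_divisors. Qed.

Lemma delta_leqS n : 0 < n -> delta n <= n.+1.
Proof. by move=> n_gt0; have := delta_leq n_gt0 (dvd1n n); rewrite divn1 add1n. Qed.

Lemma delta_prime p : prime p -> delta p = p.+1.
Proof.
move=> p_pr; apply/eqP; rewrite eqn_leq delta_leqS ?prime_gt0 //=.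
rewrite /delta big_seq; apply: (big_ind (leq p.+1)) => // [a b|d].
  by rewrite leq_min => -> ->.
rewrite -dvdn_divisors ?prime_gt0 // => /(primeP p_pr).2 /orP[]/eqP->.
  by rewrite divn1 add1n.
by rewrite divnn prime_gt0 // addn1.
Qed.

Lemma delta_composite n : 1 < n -> ~~ prime n -> delta n <= n %/ 2 + 2.
Proof.
move=> n_gt1 /primePn[|[d /andP[lt_1d lt_dn] d_dvd]]; first by rewrite ltnNge n_gt1.
apply: leq_trans (delta_leq (ltnW n_gt1) d_dvd) _.
have q_gt1 : 1 < n %/ d by rewrite ltn_divRL ?(ltnW lt_1d) // mul1n.
move: (n %/ d) (divnK d_dvd) q_gt1 => q <- q_gt1; nia.
Qed.

Theorem proposition5p1 (n : nat) (hn : 0 < n) :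
  (forall m : nat, 0 < m -> m < n -> delta m < delta n) <-> (n = 1 \/ prime n).
Proof.
split=> [delta_lt|[->|n_pr] m m_gt0 lt_mn]; last 2 first.
- by move: m_gt0 lt_mn; case: m.
- by rewrite (delta_prime n_pr); apply: leq_ltn_trans (delta_leqS m_gt0) _.
have [n_pr|n_nprime] := boolP (prime n); [by right | left].
apply/eqP; rewrite eqn_leq hn andbT leqNgt; apply/negP => n_gt1.
have half_gt0 : 0 < n %/ 2 by lia.
have [p p_pr /andP[lt_n2_p le_p_n]] := bertrand half_gt0.
have p_neq_n : p != n by apply: contraNneq n_nprime => <-.
have lt_pn : p < n by rewrite ltn_neqAle p_neq_n /=; lia.
have := delta_lt p (prime_gt0 p_pr) lt_pn; rewrite (delta_prime p_pr) ltnNge => /negP[].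
by apply: leq_trans (delta_composite n_gt1 n_nprime) _; rewrite addn2 ltnS.
Qed.
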